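(* $m(\aleph_0,\aleph_0,\aleph_0)$ equals the least size of a nonmeager set of reals, and for every infinite regular cardinal $\theta$, $m(\theta,\theta,\theta,\theta)=\mathfrak b_\theta$.
   Context: For a set $\Delta$, cardinal $\lambda$, infinite regular $\theta\le|\Delta|$ and $\chi$ equal to $2$ or an infinite cardinal, $m(\Delta,\lambda,\theta,\chi)$ is the least size of a family $\mathcal H$ of functions from $\Delta$ to $[\lambda]^{<\chi}$ such that for every $X\in[\Delta]^\theta$ and every $g:X\to\lambda$ there is $h\in\mathcal H$ with $|\{\xi\in X\mid g(\xi)\in h(\xi)\}|=\theta$; $m(\Delta,\lambda,\theta)$ means $m(\Delta,\lambda,\theta,2)$. $\mathfrak b_\theta$ is the least size of a family in ${}^\theta\theta$ unbounded with respect to $<^*$, where $f<^*g$ iff $\{\xi<\theta\mid f(\xi)\ge g(\xi)\}$ is bounded in $\theta$. *)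

From HB Require Import structures.
From mathcomp Require Import all_boot all_order all_algebra.
From mathcomp Require Import all_classical all_reals all_analysis.
Set Implicit Arguments. Unset Strict Implicit. Unset Printing Implicit Defensive.
Import numFieldNormedType.Exports.
Local Open Scope classical_set_scope.
Local Open Scope card_scope.

(* A cardinal is represented by a type (its underlying set); |A| <= |B| is
   [A #<= B] (existence of an injection), from mathcomp-classical. *)

(* Generic covering property underlying m(Delta, lambda, theta, chi):
   - [Th] is a type of cardinality theta (so |X| = theta for X ⊆ Delta,
     Delta of size theta, means [set: Th] #<= X),
   - [Ch] is a type of cardinality chi (so h(xi) ∈ [lambda]^{<chi} means
     ~ ([set: Ch] #<= h xi)). *)
Definition m_family (D L Th Ch : Type) (H : set (D -> set L)) : Prop :=
  (forall h, H h -> forall xi, ~ ([set: Ch] #<= h xi)) /\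
  (forall X : set D, [set: Th] #<= X ->
     forall g : D -> L, exists2 h, H h &
       [set: Th] #<= [set xi | X xi /\ h xi (g xi)]).

(* Well-order / infinite regular cardinal, given as a well-ordered type (T, lt)
   whose order type is an infinite regular initial ordinal. *)
Definition strict_well_order (T : Type) (lt : T -> T -> Prop) : Prop :=
  well_founded lt /\ (forall x, ~ lt x x) /\
  (forall x y z, lt x y -> lt y z -> lt x z) /\
  (forall x y, lt x y \/ x = y \/ lt y x).

Definition bounded_in (T : Type) (lt : T -> T -> Prop) (A : set T) : Prop :=
  exists b, forall a, A a -> lt a b.

Definition infinite_regular_cardinal (T : Type) (lt : T -> T -> Prop) : Prop :=
  strict_well_order lt /\
  (forall x, ~ ([set: T] #<= [set y | lt y x])) /\
  infinite_set [set: T] /\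
  (forall A : set T, ~ ([set: T] #<= A) -> bounded_in lt A).

Definition lt_star (T : Type) (lt : T -> T -> Prop) (f g : T -> T) : Prop :=
  bounded_in lt [set xi | ~ lt (f xi) (g xi)].

Definition star_unbounded (T : Type) (lt : T -> T -> Prop) (B : set (T -> T)) : Prop :=
  ~ (exists g : T -> T, forall f, B f -> lt_star lt f g).

Definition nowhere_dense (X : topologicalType) (A : set X) : Prop :=
  interior (closure A) = set0.

Definition meager (X : topologicalType) (A : set X) : Prop :=
  exists F : nat -> set X, (forall n, nowhere_dense (F n)) /\
    A `<=` \bigcup_n F n.

From mathcomp Require Import all_boot all_order all_algebra.
From mathcomp Require Import all_classical all_reals all_analysis.
From mathcomp Require Import lra zify.
Set Implicit Arguments. Unset Strict Implicit. Unset Printing Implicit Defensive.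
Import Order.TTheory GRing.Theory Num.Theory.
Import numFieldNormedType.Exports.
Local Open Scope classical_set_scope.
Local Open Scope card_scope.

(* For a regular theta both inequalities are translations.  An unbounded
   family B yields the m-family of the maps
   xi |-> {y | y <= f z for some z <= xi}   (f in B):
   if g met none of them cofinally often on X, then g composed with a map
   picking elements of X above each eta would bound B.  Conversely,
   bounding every h(xi) by F_h(xi) < theta turns an m-family into an unbounded
   family.

   m(aleph0, aleph0, aleph0) <= non(M): a real r predicts at n the k such that
   the fractional part of (n+1) r lies in the k-th interval of a fixed
   partition of [0,1).  If the reals of A fail to predict g cofinally often on
   X, each of them lies in one of the nowhere dense sets of reals that never
   predict g on X beyond N, so A is meager.

   non(M) <= m(aleph0, aleph0, aleph0): a meager set misses every real whose
   binary digits agree with a fixed x on infinitely many intervals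
   [a_n, a_(n+1)) of a fixed partition.  Given an m-family H, pick h' in H
   guessing a_(m+2) infinitely often; the partition p built from the guesses
   of h' has infinitely many blocks containing some [a_n, a_(n+1)), and some
   h in H guesses the binary code of x below p_(j+1) on infinitely many of
   those blocks j.  So the reals whose digits on the p-blocks are read off
   from pairs in H form a nonmeager set, of size |H * H| = |H|. *)

(** * Cardinal comparability and |H * H| = |H| *)

Lemma card_le_funP T U (u0 : U) (A : set T) (B : set U) :
  A #<= B <-> exists2 f : T -> U, set_fun A B f & set_inj A f.
Proof.
split=> [/card_leP[phi]|fP]; last by have /injfunPex[f] := fP; apply: inj_card_le.
pose f x := if pselect (A x) is left Ax then val (phi (exist _ x (mem_set Ax))) else u0.
exists f => [x Ax|x y /set_mem Ax /set_mem Ay]; rewrite /f.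
  by case: pselect => // Ax'; apply/set_mem/valP.
case: pselect => // Ax'; case: pselect => // Ay' /val_inj/(@inj _ _ _ phi).
by move=> /(_ (in_setT _) (in_setT _)) [].
Qed.

Lemma card_nat_leP (S : set nat) :
  [set: nat] #<= S <-> forall N, exists2 n, (N <= n)%N & S n.
Proof.
split=> [natS N|unbS].
  apply: contrapT => nS; apply: infinite_nat; apply: card_le_finite natS _.
  apply: sub_finite_set (finite_II N) => n Sn; rewrite /= ltnNge.
  by apply/negP => Nn; apply: nS; exists n.
have /choice[sel selP] : forall N, exists n, (N <= n)%N /\ S n.
  by move=> N; have [n] := unbS N; exists n.
pose f := fix f k := if k is k'.+1 then sel (f k').+1 else sel 0%N.
have f_incr : {homo f : j k / (j < k)%N}.
  by apply: homo_ltn ltn_trans _ => k; case: (selP (f k).+1).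
apply/(card_le_funP 0%N); exists f => [[|k] _|j k _ _ fjk]; first exact: (selP 0%N).2.
  exact: (selP _).2.
by case: (ltngtP j k) => // /f_incr; rewrite fjk ltnn.
Qed.

Lemma card_le_neq0 T U (A : set T) (B : set U) : A #<= B -> A !=set0 -> B !=set0.
Proof.
move=> AB [a Aa]; apply/set0P/negP => /eqP B0.
by move: AB; rewrite B0 => /card_le0P A0; rewrite A0 in Aa.
Qed.

Lemma card_le_setX T U (A : set T) (B : set U) : A #<= B -> A `*` A #<= B `*` B.
Proof.
move=> AB; have [[a Aa]|/nonemptyPn->] := pselect (A !=set0); last first.
  by rewrite set0X; apply: card_ge0.
have [b _] := card_le_neq0 AB (ex_intro _ a Aa).
have [f fAB fI] := (card_le_funP b A B).1 AB.
apply/(card_le_funP (b, b)); exists (fun q => (f q.1, f q.2)).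
  by move=> [x y] [/= Ax Ay]; split; apply: fAB.
move=> [x y] [x' y'] /set_mem[/= Ax Ay] /set_mem[/= Ax' Ay'] [].
by move=> /(fI _ _ (mem_set Ax) (mem_set Ax')) -> /(fI _ _ (mem_set Ay) (mem_set Ay')) ->.
Qed.

Lemma card_setU_le T (S A B : set T) : infinite_set S -> S `*` S #<= S ->
  A #<= S -> B #<= S -> A `|` B #<= S.
Proof.
move=> Sinf SS AS BS; have [s0 _] := infinite_setN0 Sinf.
have boolS : [set: bool] #<= S := card_le_trans (countableP _) ((infiniteP S).1 Sinf).
have [pair pairS pairI] := (card_le_funP s0 _ _).1 SS.
have [tag tagS tagI] := (card_le_funP s0 _ _).1 boolS.
have [f fS fI] := (card_le_funP s0 _ _).1 AS.
have [g gS gI] := (card_le_funP s0 _ _).1 BS.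
pose code u := (if `[< A u >] then f u else g u, tag `[< A u >]).
have codeS u : (A `|` B) u -> (S `*` S) (code u).
  move=> ABu; split; last exact: tagS.
  by rewrite /code; case: asboolP => [/fS|nA] //; apply: gS; case: ABu.
apply/(card_le_funP s0); exists (pair \o code) => [u /codeS/pairS //|u v /set_mem ABu /set_mem ABv].
move=> /(pairI _ _ (mem_set (codeS _ ABu)) (mem_set (codeS _ ABv))).
rewrite /code => -[+ /(tagI _ _ (mem_set I) (mem_set I))].
have [Au|nAu] := pselect (A u); have [Av|nAv] := pselect (A v);
  rewrite ?(asboolT Au) ?(asboolF nAu) ?(asboolT Av) ?(asboolF nAv) // => fg _.
  exact: (fI _ _ (mem_set Au) (mem_set Av) fg).
by apply: (gI _ _ _ _ fg); apply: mem_set; [case: ABu|case: ABv].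
Qed.

Lemma not_card_bool_leP T (A : set T) :
  ~ ([set: bool] #<= A) <-> forall x y, A x -> A y -> x = y.
Proof.
split=> [noA x y Ax Ay|Asub boolA].
  apply: contrapT => xy; apply: noA; apply/(card_le_funP x).
  exists (fun b : bool => if b then x else y) => [[]|[] [] _ _] //= yx.
  by case: xy.
have [x _] := card_le_neq0 boolA (ex_intro _ true I).
have [f fA fI] := (card_le_funP x _ _).1 boolA.
by move: (fI true false (mem_set I) (mem_set I) (Asub _ _ (fA true I) (fA false I))).
Qed.

Definition injective_graph T U (G : set (T * U)) :=
  (forall x y y', G (x, y) -> G (x, y') -> y = y') /\
  (forall x x' y, G (x, y) -> G (x', y) -> x = x').

Lemma injective_graph_bigcup T U (F : set (set (T * U))) :
  F `<=` @injective_graph T U -> total_on F subset ->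
  injective_graph (\bigcup_(G in F) G).
Proof.
move=> Finj Ftot; split=> [x y y'|x x' y] [G1 F1 h1] [G2 F2 h2].
  by have [s12|s21] := Ftot _ _ F1 F2; [apply: (Finj _ F2).1 (s12 _ h1) h2|
    apply: (Finj _ F1).1 h1 (s21 _ h2)].
by have [s12|s21] := Ftot _ _ F1 F2; [apply: (Finj _ F2).2 (s12 _ h1) h2|
  apply: (Finj _ F1).2 h1 (s21 _ h2)].
Qed.

Lemma injective_graph_setU1 T U (G : set (T * U)) a b :
  injective_graph G -> (forall y, ~ G (a, y)) -> (forall x, ~ G (x, b)) ->
  injective_graph (G `|` [set (a, b)]).
Proof.
move=> [Gf Gi] na nb; split=> [x y y'|x x' y] [h|[? ?]] [h'|[? ?]]; subst => //;
  by [apply: Gf h h'|apply: Gi h h'|case: (na _ h)|case: (na _ h')|case: (nb _ h)|case: (nb _ h')].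
Qed.

Lemma injective_graph_card_le T U (A : set T) (B : set U) (G : set (T * U)) :
  injective_graph G -> (forall x, A x -> exists2 y, B y & G (x, y)) -> A #<= B.
Proof.
move=> [Gf Gi] AG; have [[a Aa]|/nonemptyPn->] := pselect (A !=set0); last first.
  exact: card_ge0.
have [b0 _ _] := AG a Aa.
have /choice[f fP] : forall x, exists y, A x -> B y /\ G (x, y).
  move=> x; have [Ax|nAx] := pselect (A x); last by exists b0.
  by have [y By Gxy] := AG x Ax; exists y.
apply/(card_le_funP b0); exists f => [x /fP[]//|x x' /set_mem Ax /set_mem Ax' fx].
by apply: (Gi _ _ (f x)); [case: (fP x Ax)|rewrite fx; case: (fP x' Ax')].
Qed.

Lemma card_le_total T U (A : set T) (B : set U) : A #<= B \/ B #<= A.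
Proof.
pose P := [set G : set (T * U) | G `<=` A `*` B /\ injective_graph G].
have [G0 [[G0AB G0inj] G0max]] : exists G0, P G0 /\ forall G, G0 `<` G -> ~ P G.
  apply: Zorn_bigcup => F FP Ftot; split; last by apply: injective_graph_bigcup => // G /FP[].
  by move=> q [G /FP[GAB _] /GAB].
have [AG0|/existsNP[a /not_implyP[Aa na]]] := pselect (forall a, A a -> exists2 b, B b & G0 (a, b)).
  by left; apply: injective_graph_card_le G0inj AG0.
have [BG0|/existsNP[b /not_implyP[Bb nb]]] := pselect (forall b, B b -> exists2 a, A a & G0 (a, b)).
  right; apply: (@injective_graph_card_le _ _ _ _ [set q | G0 (q.2, q.1)]) => //.
  by case: G0inj => Gf Gi; split=> [y x x' /= h h'|y y' x /= h h']; [apply: Gi h h'|apply: Gf h h'].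
exfalso; apply: (G0max (G0 `|` [set (a, b)])).
  split=> [q h|sub]; first by left.
  by apply: na; exists b => //; apply: sub; right.
split; first by move=> q [/G0AB//|->].
apply: injective_graph_setU1 => // [y h|x h]; [apply: na|apply: nb].
  by exists y => //; case: (G0AB _ h).
by exists x => //; case: (G0AB _ h).
Qed.

Section PairingGraph.
Variable T : Type.
Implicit Types (G : set (T * T * T)) (S : set T).

Definition graph_carrier G : set T := [set u | exists w, G (u, u, w)].

(* [G] is the graph of an injection [S * S -> S], [S := graph_carrier G];
   graphs rather than functions, so that chains have unions. *)
Definition pairing_graph G := [/\ injective_graph G,
  forall u v w, G (u, v, w) ->
    [/\ graph_carrier G u, graph_carrier G v & graph_carrier G w] &
  forall u v, graph_carrier G u -> graph_carrier G v -> exists w, G (u, v, w)].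

Lemma graph_carrierS G G' : G `<=` G' -> graph_carrier G `<=` graph_carrier G'.
Proof. by move=> GG' u [w /GG' h]; exists w. Qed.

Lemma pairing_graph_setX_le G : pairing_graph G ->
  graph_carrier G `*` graph_carrier G #<= graph_carrier G.
Proof.
move=> [Ginj Gcl Gtot]; apply: injective_graph_card_le Ginj _ => -[u v] [/= Su Sv].
by have [w h] := Gtot u v Su Sv; exists w => //; case: (Gcl _ _ _ h).
Qed.

Lemma pairing_graph_bigcup (F : set (set (T * T * T))) :
  F `<=` pairing_graph -> total_on F subset -> pairing_graph (\bigcup_(G in F) G).
Proof.
move=> Fp Ftot; have sub G : F G -> G `<=` \bigcup_(G in F) G by move=> FG q h; exists G.
split.
- by apply: injective_graph_bigcup => // G /Fp[].
- move=> u v w [G FG h]; have [_ Gcl _] := Fp G FG.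
  by have [Su Sv Sw] := Gcl _ _ _ h; split; apply: graph_carrierS (sub G FG) _ _.
move=> u v [w1 [G1 F1 h1]] [w2 [G2 F2 h2]].
have [G FG [Gu Gv]] : exists2 G, F G & graph_carrier G u /\ graph_carrier G v.
  have [s12|s21] := Ftot _ _ F1 F2; [exists G2|exists G1] => //.
    by split; [exists w1; apply: s12|exists w2].
  by split; [exists w1|exists w2; apply: s21].
have [_ _ Gtot] := Fp G FG; have [w h] := Gtot u v Gu Gv.
by exists w; exists G.
Qed.

Section Extension.
Variables (G : set (T * T * T)) (S' : set T) (f : T * T -> T).
Let S := graph_carrier G.
Hypotheses (pG : pairing_graph G) (SS' : S `<=` S').
Hypotheses (fS : set_fun (S' `*` S') (S' `\` S) f) (fI : set_inj (S' `*` S') f).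

Definition graph_extension := G `|` [set (q, f q) | q in S' `*` S' `\` S `*` S].

Lemma graph_extension_carrier : graph_carrier graph_extension = S'.
Proof.
apply/seteqP; split=> u.
  case=> w [h|[[u1 u2] [[/= S'u1 _] _] [<- _ _]]] //.
  exact: SS' (ex_intro _ w h).
move=> S'u; have [Su|nSu] := pselect (S u).
  by apply: graph_carrierS Su => q h; left.
by exists (f (u, u)); right; exists (u, u) => //; split=> //= -[].
Qed.

Lemma pairing_graph_extension : pairing_graph graph_extension.
Proof.
have [[Gf Gi] Gcl Gtot] := pG.
have Gdom q w : G (q, w) -> (S `*` S) q by case: q => u v /Gcl[].
have Grng q w : G (q, w) -> S w by case: q => u v /Gcl[].
rewrite /pairing_graph graph_extension_carrier; split; first split.
- move=> q w w' [h|[p [_ nSp] [? ?]]] [h'|[p' [_ nSp'] [? ?]]]; subst => //.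
  + exact: Gf h h'.
  + by case: (nSp' (Gdom _ _ h)).
  + by case: (nSp (Gdom _ _ h')).
- move=> q q' w [h|[p [Dp _] [? ?]]] [h'|[p' [Dp' _] [? ?]]]; subst.
  + exact: Gi h h'.
  + by case: (fS Dp') => _ []; apply: Grng h.
  + by case: (fS Dp) => _ []; apply: Grng h'.
  + by apply: fI; rewrite ?inE //; congruence.
- move=> u v w [h|[p [[S'u S'v] _] [? ?]]]; subst; last first.
    by split=> //; case: (fS (conj S'u S'v)).
  by have [Su Sv Sw] := Gcl _ _ _ h; split; apply: SS'.
move=> u v S'u S'v; have [[Su Sv]|nS] := pselect (S u /\ S v).
  by have [w h] := Gtot u v Su Sv; exists w; left.
by exists (f (u, v)); right; exists (u, v).
Qed.

End Extension.

End PairingGraph.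

Lemma pairing_graph_of_setX_le T (S : set T) : S `*` S #<= S ->
  exists2 G, pairing_graph G & graph_carrier G = S.
Proof.
have carrier0 : graph_carrier (@set0 (T * T * T)) = set0.
  by apply/seteqP; split=> // u [].
have pairing0 : pairing_graph (@set0 (T * T * T)).
  by split=> [|//|u v]; [split|rewrite carrier0].
move=> SS; have [[s0 _]|/nonemptyPn S0] := pselect (S !=set0); last first.
  by exists set0; rewrite ?carrier0 ?S0.
have [f fS fI] := (card_le_funP s0 _ _).1 SS.
exists (graph_extension set0 S f); last by apply: graph_extension_carrier; rewrite carrier0.
by apply: pairing_graph_extension; rewrite ?carrier0 ?setD0.
Qed.

Lemma infinite_sub_setX_le T (H : set T) : infinite_set H ->
  exists2 N, N `<=` H & infinite_set N /\ N `*` N #<= N.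
Proof.
move=> Hinf; have [t0 _] := infinite_setN0 Hinf.
have [io ioH ioI] := (card_le_funP t0 _ _).1 ((infiniteP H).1 Hinf).
have [Nnat natN] := (card_eqPle _ _).1 (inj_card_eq ioI).
exists (io @` [set: nat]); first by move=> _ [n _ <-]; apply: ioH.
split; first exact/infiniteP.
apply: card_le_trans (card_le_setX Nnat) _; rewrite setXTT.
exact: card_le_trans ((card_eqPle _ _).1 card_nat2).1 natN.
Qed.

Lemma maximal_pairing_graph T (H : set T) : infinite_set H ->
  exists G0, [/\ pairing_graph G0, graph_carrier G0 `<=` H,
    infinite_set (graph_carrier G0) &
    forall G, G0 `<` G -> pairing_graph G -> ~ graph_carrier G `<=` H].
Proof.
move=> Hinf.
(* [G = set0] lets the union of the empty chain in. *)
pose P G := [/\ pairing_graph G, graph_carrier G `<=` H &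
  G = set0 \/ infinite_set (graph_carrier G)].
have [G0 [[pG0 G0H G0inf] G0max]] : exists G0, P G0 /\ forall G, G0 `<` G -> ~ P G.
  apply: Zorn_bigcup => F FP Ftot; split.
  - by apply: pairing_graph_bigcup => // G /FP[].
  - by move=> u [w [G FG h]]; have [_ GH _] := FP G FG; apply: GH; exists w.
  have [[G FG Ginf]|nF] := pselect (exists2 G, F G & infinite_set (graph_carrier G)).
    by right; apply: sub_infinite_set Ginf; apply: graph_carrierS => q h; exists G.
  left; apply/seteqP; split=> // q [G FG h].
  by have [_ _ [G0|Ginf]] := FP G FG; [rewrite G0 in h|case: nF; exists G].
have G0inf' : infinite_set (graph_carrier G0).
  case: G0inf => // G00 _; have [N NH [Ninf NN]] := infinite_sub_setX_le Hinf.
  have [G1 pG1 G1N] := pairing_graph_of_setX_le NN.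
  have [n Nn] := infinite_setN0 Ninf.
  apply: (G0max G1); last by split; rewrite ?G1N //; right.
  by rewrite G00; split=> // G10; move: Nn; rewrite -G1N => -[w /G10].
exists G0; split=> // G G0G pG GH; apply: (G0max G) => //; split=> //.
by right; apply: sub_infinite_set (graph_carrierS G0G.1) G0inf'.
Qed.

Theorem card_setX_le T (H : set T) : infinite_set H -> H `*` H #<= H.
Proof.
move=> /maximal_pairing_graph[G0 [pG0 G0H Sinf G0max]].
set S := graph_carrier G0 in G0H Sinf; have [s0 S0] := infinite_setN0 Sinf.
have SS : S `*` S #<= S := pairing_graph_setX_le pG0.
have [HS_S|S_HS] := card_le_total (H `\` S) S.
  have HS : H #<= S.
    apply: card_le_trans (card_setU_le Sinf SS (card_lexx S) HS_S).
    by apply: subset_card_le => u Hu; have [Su|nSu] := pselect (S u); [left|right].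
  exact: card_le_trans (card_le_setX HS) (card_le_trans SS (subset_card_le G0H)).
(* Otherwise [S] extends by a disjoint copy [phi @` S] inside [H]: the new
   pairs are few enough to be coded injectively into the copy. *)
exfalso; have [phi phiS phiI] := (card_le_funP s0 _ _).1 S_HS.
pose S' := S `|` phi @` S.
have S'S : S' #<= S := card_setU_le Sinf SS (card_lexx S) (card_image_le phi S).
have S'2_new : S' `*` S' #<= S' `\` S.
  apply: card_le_trans (card_le_setX S'S) (card_le_trans SS _).
  apply: card_le_trans ((card_eqPle _ _).1 (inj_card_eq phiI)).2 _.
  by apply: subset_card_le => _ [u Su <-]; split; [right; exists u|case: (phiS u Su)].
have [psi psiS psiI] := (card_le_funP s0 _ _).1 S'2_new.
have SS' : S `<=` S' by move=> u; left.
have G1S' : graph_carrier (graph_extension G0 S' psi) = S'.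
  exact: graph_extension_carrier.
apply: (G0max (graph_extension G0 S' psi)).
- split=> [q|G10]; first by left.
  have : S' (phi s0) by right; exists s0.
  by rewrite -G1S' => /(graph_carrierS G10); case: (phiS s0 S0).
- exact: pairing_graph_extension.
by rewrite G1S' => u [/G0H //|[v Sv <-]]; case: (phiS v Sv).
Qed.

(** * Regular cardinals: m(theta, theta, theta, theta) = b_theta *)

Section RegularCardinal.
Variables (T : Type) (lt : T -> T -> Prop).
Hypothesis regT : infinite_regular_cardinal lt.

Let small (A : set T) := ~ ([set: T] #<= A).

Let lt_irr x : ~ lt x x.
Proof. by case: regT => -[_ []]. Qed.

Let lt_trans x y z : lt x y -> lt y z -> lt x z.
Proof. by case: regT => -[_ [_ [+ _]]] _; apply. Qed.

Let lt_total x y : lt x y \/ x = y \/ lt y x.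
Proof. by case: regT => -[_ [_ [_ +]]] _; apply. Qed.

Let bounded_small A : bounded_in lt A -> small A.
Proof.
case=> b Ab TA; case: regT => _ [initT _]; apply: (initT b).
by apply: card_le_trans TA _; apply: subset_card_le => x /Ab.
Qed.

Let small_bounded A : small A -> bounded_in lt A.
Proof. by case: regT => _ [_ [_]]; apply. Qed.

Let small_image (f : T -> T) A : small A -> small (f @` A).
Proof. by move=> sA TfA; apply: sA; apply: card_le_trans TfA (card_image_le f A). Qed.

Let succ_exists x : exists y, lt x y.
Proof.
have [|b xb] := @small_bounded [set x]; last by exists b; apply: xb.
by case: regT => _ [_ [infT _]] Tx; apply: infT; apply: card_le_finite Tx (finite_set1 x).
Qed.

Definition down_image (f : T -> T) (xi : T) : set T :=
  [set y | exists2 z, z = xi \/ lt z xi & y = f z \/ lt y (f z)].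

Let down_image_small f xi : small (down_image f xi).
Proof.
have [b xb] := succ_exists xi.
have [|c fc] := @small_bounded (f @` [set z | z = xi \/ lt z xi]).
  by apply/small_image/bounded_small; exists b => z [->|/lt_trans]; last apply.
apply: bounded_small; exists c => y [z zxi [->|yfz]]; first by apply: fc; exists z.
by apply: lt_trans yfz _; apply: fc; exists z.
Qed.

Lemma m_family_of_star_unbounded (B : set (T -> T)) : star_unbounded lt B ->
  exists2 H : set (T -> set T), m_family T T H & H #<= B.
Proof.
move=> unbB; exists (down_image @` B); last exact: card_image_le.
split=> [_ [f _ <-] xi|X TX g]; first exact: down_image_small.
apply: contrapT => noh; apply: unbB.
have /choice[e eX] : forall eta, exists x, X x /\ (x = eta \/ lt eta x).
  move=> eta; apply: contrapT => noX; apply: (bounded_small (A := X)) TX.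
  exists eta => x Xx; have [//|[xeta|etax]] := lt_total x eta; case: noX; exists x.
    by split=> //; left.
  by split=> //; right.
exists (g \o e) => f Bf.
have [beta hit_beta] : bounded_in lt [set xi | X xi /\ down_image f xi (g xi)].
  by apply: small_bounded => hit; apply: noh; exists (down_image f) => //; exists f.
exists beta => eta /= fg; apply: contrapT => eta_beta.
have [Xe eta_e] := eX eta.
have [] : ~ lt (e eta) beta by case: eta_e => [->|/lt_trans] // /[apply].
apply: hit_beta; split=> //; exists eta => //; first by case: eta_e => [->|]; [left|right].
by have [|[->|]] := lt_total (f eta) (g (e eta)); [|left|right].
Qed.

Lemma star_unbounded_of_m_family (H : set (T -> set T)) : m_family T T H ->
  exists2 B : set (T -> T), star_unbounded lt B & B #<= H.
Proof.
case=> Hsmall Hcov.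
have /choice[F Fbound] : forall h, exists Fh : T -> T,
    H h -> forall xi y, h xi y -> lt y (Fh xi).
  move=> h; have [Hh|nHh] := pselect (H h); last by exists id.
  have /choice[Fh Fhb] := fun xi => small_bounded (Hsmall h Hh xi).
  by exists Fh.
exists (F @` H); last exact: card_image_le.
case=> G GB; have [h Hh TGh] := Hcov setT (card_lexx _) G.
have [beta Gbeta] := GB (F h) (ex_intro2 _ _ h Hh erefl).
apply: bounded_small TGh; exists beta => xi [_ hG].
apply: Gbeta => /= GFh; apply: (lt_irr (x := G xi)).
exact: lt_trans (Fbound h Hh xi _ hG) GFh.
Qed.

End RegularCardinal.

(** * Nonmeager sets of reals give m-families *)

Section FracCode.
Variable R : realType.
Local Open Scope ring_scope.

Lemma ballR (x y e : R) : ball x e y <-> `|x - y| < e.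
Proof. by rewrite -ball_normE. Qed.

Definition frac_cut (k : nat) : R := 1 - k.+1%:R^-1.

Lemma frac_cut_ge0 k : 0 <= frac_cut k.
Proof. by rewrite subr_ge0 invf_le1 // ler1n. Qed.

Lemma frac_cut_lt1 k : frac_cut k < 1.
Proof. by rewrite ltrBlDr ltrDl invr_gt0 ltr0n. Qed.

Lemma frac_cut_le : {homo frac_cut : k k' / (k <= k')%N >-> k <= k'}.
Proof. by move=> k k' kk'; rewrite lerD2l lerN2 lef_pV2 ?posrE ?ltr0n // ler_nat. Qed.

Lemma frac_cut_lt k : frac_cut k < frac_cut k.+1.
Proof. by rewrite ltrD2l ltrN2 ltf_pV2 ?posrE ?ltr0n // ltr_nat. Qed.

Definition frac_code (r : R) (n : nat) : set nat :=
  [set k | exists m : int, m%:~R + frac_cut k < r * n.+1%:R < m%:~R + frac_cut k.+1].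

Lemma frac_code_uniq r n k k' : frac_code r n k -> frac_code r n k' -> k = k'.
Proof.
move=> [m /andP[lo hi]] [m' /andP[lo' hi']].
have := frac_cut_ge0 k; have := frac_cut_ge0 k'.
have := frac_cut_lt1 k.+1; have := frac_cut_lt1 k'.+1 => *.
have fm : Num.floor (r * n.+1%:R) = m by apply: floor_def; rewrite intrD; apply/andP; split; lra.
have fm' : Num.floor (r * n.+1%:R) = m' by apply: floor_def; rewrite intrD; apply/andP; split; lra.
rewrite fm in fm'; subst m'.
by case: (ltngtP k k') => // /frac_cut_le ?; exfalso; lra.
Qed.

Lemma frac_code_miss_nowhere_dense (X : set nat) (g : nat -> nat) (N : nat) :
  [set: nat] #<= X ->
  nowhere_dense [set r : R | forall n, X n -> (N <= n)%N -> ~ frac_code r n (g n)].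
Proof.
move=> /card_nat_leP unbX; set M := [set r | _].
apply/seteqP; split=> // z /= /nbhs_ballP[e /= e0 zeM].
have [n + Xn] := unbX (maxn N (Num.truncn e^-1)); rewrite geq_max => /andP[Nn en].
pose c : R := n.+1%:R; have c0 : 0 < c by rewrite ltr0n.
have ec : 1 < e * c.
  rewrite -(mulfV (lt0r_neq0 e0)) ltr_pM2l //.
  by apply: lt_le_trans (truncnS_gt _) _; rewrite ler_nat ltnS.
pose k := g n; pose m := Num.floor (z * c).
have := floor_le (z * c); have := floorD1_gt (z * c); rewrite intrD => zc1 zc2.
have := frac_cut_ge0 k; have := frac_cut_lt1 k.+1; have := frac_cut_lt k => *.
(* [r0 * c] sits mid-interval [k] above [m]; nearby reals still predict [k] at [n]. *)
pose r0 := (m%:~R + (frac_cut k + frac_cut k.+1) / 2) / c.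
have r0c : r0 * c = m%:~R + (frac_cut k + frac_cut k.+1) / 2 by rewrite divfK ?gt_eqF.
have /zeM M_r0 : ball z e r0.
  apply/ballR; rewrite -(ltr_pM2r c0) -[c in X in X < _]ger0_norm ?ltW // -normrM.
  by rewrite mulrBl r0c; apply: lt_trans ec; rewrite ltr_norml; apply/andP; split; lra.
pose d := (frac_cut k.+1 - frac_cut k) / 2 / c.
have d0 : 0 < d by rewrite !divr_gt0 // subr_gt0.
have dc : d * c = (frac_cut k.+1 - frac_cut k) / 2 by rewrite divfK ?gt_eqF.
have [r [Mr /ballR r0r]] := M_r0 (ball r0 d) (nbhsx_ballx _ _ d0).
apply: (Mr n Xn Nn); exists m.
have : `|r0 * c - r * c| < d * c by rewrite -mulrBl normrM (ger0_norm (ltW c0)) ltr_pM2r.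
by rewrite r0c dc ltr_norml => /andP[? ?]; apply/andP; split; lra.
Qed.

Lemma m_family_of_nonmeager (A : set R) : ~ meager A ->
  exists2 H : set (nat -> set nat), m_family nat bool H & H #<= A.
Proof.
move=> nA; exists (frac_code @` A); last exact: card_image_le.
split=> [_ [r _ <-] n|X natX g].
  by apply/not_card_bool_leP => k k'; apply: frac_code_uniq.
apply: contrapT => noh; apply: nA.
exists (fun N => [set r | forall n, X n -> (N <= n)%N -> ~ frac_code r n (g n)]).
split=> [N|r Ar]; first exact: frac_code_miss_nowhere_dense.
apply: contrapT => nr; apply: noh; exists (frac_code r); first by exists r.
apply/card_nat_leP => N; apply: contrapT => nN; apply: nr; exists N => //= n Xn Nn rn.
by apply: nN; exists n.
Qed.

End FracCode.

(** * Binary expansions and meager sets *)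

Fixpoint bin_prefix (d : nat -> bool) (L : nat) : nat :=
  if L is L'.+1 then 2 * bin_prefix d L' + d L' else 0.

Lemma bin_prefix_lt d L : bin_prefix d L < 2 ^ L.
Proof. by elim: L => [|L IH] //=; rewrite expnS; case: (d L) => /=; lia. Qed.

Lemma bin_prefix_agree d d' a j : bin_prefix d a = bin_prefix d' a ->
  (forall i, a <= i < a + j -> d i = d' i) -> bin_prefix d (a + j) = bin_prefix d' (a + j).
Proof.
move=> da; elim: j => [|j IH] dd'; first by rewrite addn0.
rewrite addnS /= IH ?dd' //; first lia.
by move=> i /andP[ai ij]; apply: dd'; lia.
Qed.

Lemma eq_bin_prefix d d' L : (forall i, i < L -> d i = d' i) ->
  bin_prefix d L = bin_prefix d' L.
Proof. by move=> dd'; apply: (@bin_prefix_agree _ _ 0) => // i /dd'. Qed.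

Lemma bin_prefix_ge d L j : bin_prefix d L * 2 ^ j <= bin_prefix d (L + j).
Proof. by elim: j => [|j IH]; rewrite ?muln1 ?addn0 // addnS /= expnS; nia. Qed.

Lemma bin_prefix_lt_succ d L j : bin_prefix d (L + j) < (bin_prefix d L).+1 * 2 ^ j.
Proof.
elim: j => [|j IH]; first by rewrite muln1 addn0.
by rewrite addnS /= expnS; case: (d (L + j)) => /=; nia.
Qed.

Lemma bin_prefix_cross d L L' : bin_prefix d L' * 2 ^ L <= (bin_prefix d L).+1 * 2 ^ L'.
Proof.
have [LL'|L'L] := leqP L L'.
  have := bin_prefix_lt_succ d L (L' - L); rewrite subnKC // => /ltnW lt.
  rewrite -{2}(subnK LL') expnD mulnA.
  by apply: leq_mul.
have := bin_prefix_ge d L' (L - L'); rewrite subnKC ?(ltnW L'L) // => ge.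
rewrite -{1}(subnK (ltnW L'L)) expnD mulnA leq_mul //.
exact: leq_trans ge (leqnSn _).
Qed.

Lemma bin_prefix_extend d L j K : bin_prefix d L * 2 ^ j <= K < (bin_prefix d L).+1 * 2 ^ j ->
  exists2 d', (forall i, i < L -> d' i = d i) & bin_prefix d' (L + j) = K.
Proof.
elim: j K => [|j IH] K; first by rewrite !muln1 addn0 => ?; exists d => //; lia.
rewrite expnS => /andP[lo hi]; have Kdiv2 := odd_double_half K; rewrite -muln2 in Kdiv2.
have [|d' d'd d'K] := IH K./2; first by apply/andP; split; lia.
exists (fun i => if i == L + j then odd K else d' i) => [i iL|].
  have -> : (i == L + j) = false by apply/eqP; lia.
  exact: d'd.
rewrite addnS /= eqxx (@eq_bin_prefix _ d') => [|i ij]; first lia.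
by have -> : (i == L + j) = false by apply/eqP; lia.
Qed.

(* Least significant digit first, unlike [bin_prefix]. *)
Fixpoint bin_code (x : nat -> bool) (L : nat) : nat :=
  if L is L'.+1 then bin_code x L' + x L' * 2 ^ L' else 0.

Lemma bin_code_lt x L : bin_code x L < 2 ^ L.
Proof. by elim: L => [|L IH] //=; rewrite expnS; case: (x L) => /=; lia. Qed.

Lemma bin_code_bit x L i : i < L -> odd (bin_code x L %/ 2 ^ i) = x i.
Proof.
elim: L => [|L IH] // iL /=; case: (ltngtP i L) iL => [iL _|Li|-> _].
- rewrite divnDr; last by apply: dvdn_mull; apply: dvdn_exp2l; lia.
  rewrite oddD IH // -(subnK (ltnW iL)) expnD mulnA mulnK ?expn_gt0 //.
  by rewrite oddM oddX subn_eq0 leqNgt iL andbF addbF.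
- by rewrite ltnS leqNgt Li.
rewrite addnC divnMDl ?expn_gt0 // divn_small ?bin_code_lt // addn0.
by case: (x L).
Qed.

Section BinaryReal.
Variable R : realType.
Local Open Scope ring_scope.

Definition two_pow (L : nat) : R := (2 ^ L)%:R.

Lemma two_pow_gt0 L : 0 < two_pow L.
Proof. by rewrite ltr0n expn_gt0. Qed.

Lemma two_powD L j : two_pow (L + j) = two_pow L * two_pow j.
Proof. by rewrite /two_pow expnD natrM. Qed.

Definition bin_approx (d : nat -> bool) : set R :=
  [set (bin_prefix d L)%:R / two_pow L | L in [set: nat]].

Definition bin_real (d : nat -> bool) : R := sup (bin_approx d).

Let bin_approx_neq0 d : bin_approx d !=set0.
Proof. by exists ((bin_prefix d 0)%:R / two_pow 0), 0%N. Qed.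

Lemma bin_approx_ub d L : ubound (bin_approx d) ((bin_prefix d L).+1%:R / two_pow L).
Proof.
move=> _ [L' _ <-]; rewrite ler_pdivrMr ?two_pow_gt0 // mulrAC.
by rewrite ler_pdivlMr ?two_pow_gt0 // -!natrM ler_nat bin_prefix_cross.
Qed.

Lemma bin_real_ge d L : (bin_prefix d L)%:R <= bin_real d * two_pow L.
Proof.
rewrite -ler_pdivrMr ?two_pow_gt0 //; apply: sup_upper_bound; last by exists L.
split; first exact: bin_approx_neq0.
by exists ((bin_prefix d 0).+1%:R / two_pow 0); apply: bin_approx_ub.
Qed.

Lemma bin_real_le d L : bin_real d * two_pow L <= (bin_prefix d L).+1%:R.
Proof.
rewrite -ler_pdivlMr ?two_pow_gt0 //.
by apply: ge_sup; [apply: bin_approx_neq0|apply: bin_approx_ub].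
Qed.

Lemma nowhere_dense_gap (G : set R) (lo hi : R) : nowhere_dense G -> lo < hi ->
  exists z e, [/\ lo < z < hi, 0 < e & forall y, `|z - y| < e -> ~ G y].
Proof.
move=> nG lohi.
have [z zlohi nz] : exists2 z, lo < z < hi & ~ closure G z.
  apply: contrapT => nz; suff : interior (closure G) ((lo + hi) / 2) by rewrite nG.
  apply/nbhs_ballP; exists ((hi - lo) / 2) => /= [|y /ballR]; first lra.
  rewrite ltr_norml => /andP[y1 y2]; apply: contrapT => ny; apply: nz.
  by exists y => //; apply/andP; split; lra.
have /existsNP[B /not_implyP[zB GB]] : ~ forall B, nbhs z B -> G `&` B !=set0 by [].
have [e /= e0 zeB] := (nbhs_ballP _ _).1 zB.
exists z, e; split=> // y zy Gy; apply: GB; exists y; split=> //.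
by apply: zeB; apply/ballR.
Qed.

Lemma dyadic_escape (G : set R) : nowhere_dense G -> forall L K, exists j K',
  (K * 2 ^ j <= K' < K.+1 * 2 ^ j)%N /\
  forall y, K'%:R <= y * two_pow (L + j) <= K'.+1%:R -> ~ G y.
Proof.
move=> nG L K; pose lo := K%:R / two_pow L; pose hi := K.+1%:R / two_pow L.
have lohi : lo < hi by rewrite ltr_pM2r ?invr_gt0 ?two_pow_gt0 // ltr_nat.
have lo0 : 0 <= lo by rewrite divr_ge0 // ltW // two_pow_gt0.
have [z [e [/andP[zlo zhi] e0 zeG]]] := nowhere_dense_gap nG lohi.
pose j := Num.truncn e^-1; pose c := two_pow (L + j).
have c0 : 0 < c by apply: two_pow_gt0.
have ec : 1 < e * c.
  rewrite -(mulfV (lt0r_neq0 e0)) ltr_pM2l //.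
  apply: lt_le_trans (truncnS_gt _) _; rewrite /c /two_pow ler_nat.
  exact: leq_trans (ltn_expl _ (isT : 1 < 2)%N) (leq_pexp2l _ (leq_addl _ _)).
have z0 : 0 <= z * c by rewrite mulr_ge0 // ltW // (le_lt_trans lo0).
have /andP[zc1 zc2] := truncn_itv z0; pose K' := Num.truncn (z * c).
have loc : lo * c = (K * 2 ^ j)%:R.
  by rewrite /c two_powD mulrA divfK ?gt_eqF ?two_pow_gt0 // natrM.
have hic : hi * c = (K.+1 * 2 ^ j)%:R.
  by rewrite /c two_powD mulrA divfK ?gt_eqF ?two_pow_gt0 // natrM.
exists j, K'; split.
  apply/andP; split; last by rewrite -(ltr_nat R) -hic (le_lt_trans zc1) // ltr_pM2r.
  by rewrite -ltnS -(ltr_nat R) -loc (lt_le_trans _ (ltW zc2)) // ltr_pM2r.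
move=> y /andP[y1 y2]; apply: zeG; rewrite -(ltr_pM2r c0) -[c in X in X < _]ger0_norm ?ltW //.
rewrite -normrM mulrBl; apply: le_lt_trans ec; rewrite ler_norml.
by apply/andP; split; rewrite -/c -/K' in zc1 zc2 y1 y2 *; lra.
Qed.

End BinaryReal.

Arguments bin_real {R}.

Section Partition.
Variable p : nat -> nat.
Hypotheses (p0 : p 0 = 0) (p_incr : forall j, p j < p j.+1).

Lemma partition_le : {homo p : j k / j <= k}.
Proof. by apply: homo_leq leqnn leq_trans _ => j; apply: ltnW. Qed.

Lemma partition_ge_id j : j <= p j.
Proof. by elim: j => [|j IH] //; apply: leq_ltn_trans IH (p_incr j). Qed.

Fixpoint block_index (i : nat) : nat :=
  if i is i'.+1 then
    (if p (block_index i').+1 <= i'.+1 then (block_index i').+1 else block_index i')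
  else 0.

Lemma block_indexP i : p (block_index i) <= i < p (block_index i).+1.
Proof.
elim: i => [|i IH] /=; first by rewrite p0 leqnn (leq_trans _ (p_incr 0)) // p0.
case/andP: IH => lo hi; case: ifP => h.
  have e : p (block_index i).+1 = i.+1 by apply/eqP; rewrite eqn_leq h hi.
  by rewrite e leqnn /= (leq_trans _ (p_incr _)) // e.
by rewrite ltnNge h andbT (leq_trans lo).
Qed.

Lemma block_index_eq i j : p j <= i < p j.+1 -> block_index i = j.
Proof.
move=> /andP[lo hi]; have /andP[lo' hi'] := block_indexP i.
case: (ltngtP (block_index i) j) => // /partition_le; rewrite leqNgt.
  by rewrite (leq_ltn_trans lo hi').
by rewrite (leq_ltn_trans lo' hi).
Qed.

End Partition.

Fixpoint partition_above (t : nat -> nat) (j : nat) : nat :=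
  if j is j'.+1 then
    maxn (partition_above t j').+1 (\max_(i < (partition_above t j').+1) t i)
  else 0.

Lemma partition_above_incr t j : partition_above t j < partition_above t j.+1.
Proof. by rewrite /= leq_maxl. Qed.

Lemma partition_above_ge t j i : i <= partition_above t j -> t i <= partition_above t j.+1.
Proof.
rewrite -ltnS => ij; rewrite /= (leq_trans _ (leq_maxr _ _)) //.
exact: (@leq_bigmax_cond _ _ (fun k : 'I_ _ => t k) (Ordinal ij)).
Qed.

Definition extends (a : nat) (x : nat -> bool) (a' : nat) (x' : nat -> bool) :=
  (a <= a')%N /\ forall i, (i < a)%N -> x' i = x i.

Lemma extends_trans a x a' x' a'' x'' :
  extends a x a' x' -> extends a' x' a'' x'' -> extends a x a'' x''.
Proof.
move=> [aa' x'x] [a'a'' x''x']; split=> [|i ia]; first exact: leq_trans aa' a'a''.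
by rewrite x''x' ?x'x //; apply: leq_trans ia aa'.
Qed.

Section FiniteExtension.
Variables (I : eqType) (a0 : nat) (P : I -> nat -> (nat -> bool) -> Prop).
Hypothesis P_up : forall t a x a' x', P t a x -> extends a x a' x' -> P t a' x'.
Hypothesis P_dense : forall t a x, (a0 <= a)%N ->
  exists a' x', extends a x a' x' /\ P t a' x'.

Lemma extends_all (s : seq I) a x : (a0 <= a)%N ->
  exists a' x', extends a x a' x' /\ forall t, t \in s -> P t a' x'.
Proof.
elim: s a x => [|t s IH] a x a0a; first by exists a, x; split=> //; split.
have [a1 [x1 [ext1 Pt]]] := P_dense t x a0a.
have [a2 [x2 [ext2 Ps]]] := IH a1 x1 (leq_trans a0a ext1.1).
exists a2, x2; split=> [|t']; first exact: extends_trans ext1 ext2.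
by rewrite inE => /orP[/eqP->|/Ps//]; apply: P_up ext2.
Qed.

End FiniteExtension.

Section MeagerPattern.
Variables (R : realType) (F : nat -> set R).
Hypothesis F_nd : forall k, nowhere_dense (F k).

Definition avoids (a K k a' : nat) (x' : nat -> bool) := forall d,
  bin_prefix d a = K -> (forall i, (a <= i < a')%N -> d i = x' i) -> ~ F k (bin_real d).

Lemma avoids_up a K k a' x' a'' x'' :
  avoids a K k a' x' -> extends a' x' a'' x'' -> avoids a K k a'' x''.
Proof.
move=> av [a'a'' x''x'] d dK dx; apply: av dK _ => i /andP[ai ia'].
by rewrite -x''x' // dx // ai (leq_trans ia' a'a'').
Qed.

Lemma avoids_dense a K k a' x' : (a <= a')%N ->
  exists a'' x'', extends a' x' a'' x'' /\ avoids a K k a'' x''.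
Proof.
move=> aa'; have [Kbig|Ksmall] := leqP (2 ^ a) K.
  exists a', x'; split=> [|d dK]; first by split.
  by have := bin_prefix_lt d a; rewrite dK ltnNge Kbig.
have [d0' _ d0'K] : exists2 d0', (forall i, (i < 0)%N -> d0' i = false) &
    bin_prefix d0' (0 + a) = K.
  by apply: bin_prefix_extend; rewrite /= mul1n Ksmall.
(* [d0] has prefix value [K] and follows [x'] on [a, a'); its dyadic interval
   at level [a'] contains a finer one missing [F k], reached by extending [x']. *)
pose d0 i := if (i < a)%N then d0' i else x' i.
have d0K : bin_prefix d0 a = K.
  by rewrite -d0'K add0n; apply: eq_bin_prefix => i ia; rewrite /d0 ia.
have [j [K' [K'_range escG]]] := dyadic_escape (F_nd k) a' (bin_prefix d0 a').
have [d1 d1d0 d1K'] := bin_prefix_extend K'_range.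
have d1K : bin_prefix d1 a = K.
  by rewrite -d0K; apply: eq_bin_prefix => i ia; apply/d1d0/(leq_trans ia aa').
have aa'j := leq_trans aa' (leq_addr j a').
exists (a' + j)%N, (fun i => if (i < a')%N then x' i else d1 i).
split=> [|d dK dx]; first by split=> [|i ->]; first exact: leq_addr.
have dK' : bin_prefix d (a' + j) = K'.
  rewrite -d1K' -(subnKC aa'j); apply: bin_prefix_agree; first by rewrite dK d1K.
  move=> i /andP[ai]; rewrite subnKC // => ia'j; rewrite dx ?ai //.
  by case: ifP => // ia'; rewrite d1d0 // /d0 ltnNge ai.
by apply: escG; rewrite -dK'; apply/andP; split; [apply: bin_real_ge|apply: bin_real_le].
Qed.

Lemma avoid_block a n : exists a' x', (a < a')%N /\ forall d,
  (forall i, (a <= i < a')%N -> d i = x' i) -> forall k, (k <= n)%N -> ~ F k (bin_real d).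
Proof.
(* Treat every prefix value [K < 2 ^ a] and every [k <= n] in turn. *)
have [a' [x' [[aa' _] avs]]] := @extends_all _ a.+1 (fun t => avoids a t.1 t.2)
  (fun t => @avoids_up a t.1 t.2) (fun t a' x' a'a => @avoids_dense a t.1 t.2 a' x' (ltnW a'a))
  [seq (K, k) | K <- iota 0 (2 ^ a), k <- iota 0 n.+1] a.+1 (fun=> false) (leqnn _).
exists a', x'; split=> // d dx k kn; apply: (avs (bin_prefix d a, k)) => //.
by apply: allpairs_f; rewrite mem_iota ?bin_prefix_lt // ltnS.
Qed.

Lemma meager_pattern : exists (a : nat -> nat) (x : nat -> bool),
  [/\ a 0 = 0, forall n, a n < a n.+1 &
      forall n d, (forall i, (a n <= i < a n.+1)%N -> d i = x i) ->
        forall k, (k <= n)%N -> ~ F k (bin_real d)].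
Proof.
have /choice[blk blkP] : forall an : nat * nat, exists ax : nat * (nat -> bool),
    (an.1 < ax.1)%N /\ forall d, (forall i, (an.1 <= i < ax.1)%N -> d i = ax.2 i) ->
      forall k, (k <= an.2)%N -> ~ F k (bin_real d).
  by move=> [a n]; have [a' [x' ?]] := avoid_block a n; exists (a', x').
pose a := fix a n := if n is n'.+1 then (blk (a n', n')).1 else 0%N.
have a0 : a 0%N = 0%N by [].
have a_incr n : (a n < a n.+1)%N by case: (blkP (a n, n)).
(* On each block [a n, a n.+1), [x] follows the digits chosen at stage [n]. *)
exists a, (fun i => (blk (a (block_index a i), block_index a i)).2 i).
split=> // n d dx; apply: (blkP (a n, n)).2 => i ai.
by rewrite dx // (block_index_eq a0 a_incr ai).
Qed.

End MeagerPattern.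

(** * m-families give nonmeager sets of reals *)

Definition guess (h : nat -> set nat) (n : nat) : nat := xget 0%N (h n).

Lemma guess_hit (h : nat -> set nat) n y :
  ~ ([set: bool] #<= h n) -> h n y -> guess h n = y.
Proof. by move=> /not_card_bool_leP hn hy; apply: (hn _ _ _ hy); apply: xgetI hy. Qed.

Lemma m_family_infinite (H : set (nat -> set nat)) : m_family nat bool H -> infinite_set H.
Proof.
move=> [Hs Hc] /finite_set_countable/(card_le_funP 0%N)[io _ ioI].
have /choice[e eP] : forall i, exists h, forall h0, H h0 -> io h0 = i -> h = h0.
  move=> i; have [[h0 Hh0 <-]|none] := pselect (exists2 h0, H h0 & io h0 = i).
    by exists h0 => h1 Hh1 /(ioI _ _ (mem_set Hh1) (mem_set Hh0)).
  by exists (fun=> set0) => h0 Hh0 ih0; case: none; exists h0.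
(* Diagonalise against the enumeration [e] of [H]. *)
pose g m := (\max_(i < m.+1) guess (e i) m).+1.
have [h Hh /card_nat_leP/(_ (io h))[m hm [_ hgm]]] := Hc setT (card_lexx _) g.
have := @leq_bigmax _ (fun i : 'I_m.+1 => guess (e i) m) (Ordinal (hm : io h < m.+1)).
by rewrite /= (eP _ h Hh erefl) (guess_hit (Hs h Hh m) hgm) /g ltnn.
Qed.

Definition block_digits (h h' : nat -> set nat) (i : nat) : bool :=
  odd (guess h (block_index (partition_above (guess h')) i) %/ 2 ^ i).

Lemma partition_above_catches (a t : nat -> nat) :
  a 0 = 0 -> (forall n, a n < a n.+1) ->
  (forall N, exists2 m, N <= m & t m = a m.+2) ->
  let p := partition_above t in
  forall N, exists2 j, N <= j & exists n, p j <= a n /\ a n.+1 <= p j.+1.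
Proof.
move=> a0 a_incr hit p N; have [m Nm tm] := hit (p N).
have p0 : p 0 = 0 by []; have p_incr := partition_above_incr t.
have /andP[pjm mpj] := block_indexP p0 p_incr m; set j := block_index p m in pjm mpj *.
have Nj : N <= j.
  rewrite leqNgt; apply/negP => /(partition_le p_incr) pjN.
  by have := leq_trans pjN Nm; rewrite leqNgt mpj.
have ampj : a m.+2 <= p j.+2 by rewrite -tm; apply/partition_above_ge/ltnW.
have [pja|apj] := leqP (p j.+1) (a m.+1); first by exists j.+1 => //; [apply: leqW|exists m.+1].
exists j => //; exists m; split; last exact: ltnW.
exact: leq_trans pjm (partition_ge_id a_incr m).
Qed.

Lemma block_digits_nonmeager (R : realType) (H : set (nat -> set nat)) :
  m_family nat bool H ->
  ~ meager [set (bin_real (block_digits pr.1 pr.2) : R) | pr in H `*` H].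
Proof.
move=> [Hs Hc] [F [F_nd Acov]]; have [a [x [a0 a_incr ax]]] := meager_pattern F_nd.
have [h' Hh' hit'] := Hc setT (card_lexx _) (fun m => a m.+2).
pose p := partition_above (guess h'); have p0 : p 0 = 0 by [].
have p_incr := partition_above_incr (guess h').
have K_unb := @partition_above_catches a (guess h') a0 a_incr.
have [|h Hh hit] := Hc _ (proj2 (card_nat_leP _) (K_unb _)) (fun j => bin_code x (p j.+1)).
  move=> N; have [m Nm [_ hm]] := (card_nat_leP _).1 hit' N.
  by exists m => //; apply: guess_hit (Hs _ Hh' m) hm.
have [k Fk] : exists k, F k (bin_real (block_digits h h')).
  by have [|k _] := Acov (bin_real (block_digits h h')); [exists (h, h')|exists k].
have [j kj [[n [pja anp]] hj]] := (card_nat_leP _).1 hit (a k).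
apply: (ax n _ _ k _ Fk) => [i /andP[ani ian]|].
  rewrite /block_digits -/p (@block_index_eq _ p0 p_incr i j); last first.
    by rewrite (leq_trans pja ani) (leq_trans ian anp).
  by rewrite (guess_hit (Hs _ Hh j) hj) bin_code_bit // (leq_trans ian anp).
rewrite leqNgt; apply/negP => /(homo_ltn ltn_trans a_incr) ank.
by have := leq_trans kj (leq_trans (partition_ge_id p_incr j) pja); rewrite leqNgt ank.
Qed.

Theorem proposition2p3 :
  (* m(aleph0, aleph0, aleph0) = m(aleph0,aleph0,aleph0,2) = non(M) *)
  (forall R : realType,
     (forall A : set R, ~ meager A ->
        exists2 H : set (nat -> set nat), m_family nat bool H & H #<= A) /\
     (forall H : set (nat -> set nat), m_family nat bool H ->
        exists2 A : set R, ~ meager A & A #<= H)) /\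
  (* m(theta, theta, theta, theta) = b_theta for infinite regular theta *)
  (forall (T : Type) (lt : T -> T -> Prop), infinite_regular_cardinal lt ->
     (forall B : set (T -> T), star_unbounded lt B ->
        exists2 H : set (T -> set T), m_family T T H & H #<= B) /\
     (forall H : set (T -> set T), m_family T T H ->
        exists2 B : set (T -> T), star_unbounded lt B & B #<= H)).
Proof.
split=> [R|T lt regT]; last first.
  by split; [apply: m_family_of_star_unbounded|apply: star_unbounded_of_m_family].
split=> [A|H Hm]; first exact: m_family_of_nonmeager.
exists [set (bin_real (block_digits pr.1 pr.2) : R) | pr in H `*` H].
  exact: block_digits_nonmeager.
exact: card_le_trans (card_image_le _ _) (card_setX_le (m_family_infinite Hm)).
Qed.
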